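(* Let $k\ge 1$ and let $T_{2,k}$ be the balanced binary tree of depth $k$, i.e. the rooted tree with $2^{k}-1$ vertices in which the root and every vertex at distance at most $k-2$ from the root has exactly two children, and all leaves are at distance $k-1$ from the root. Then \[ \pi_{leaf}(T_{2,k})=\pi(T_{2,k})=\frac{2^{k}+(-1)^{k-1}}{3}, \] the $(k-1)$-th Jacobsthal number.
   Context: Let $G$ be a finite simple undirected graph. For $S\subseteq V(G)$, the propagation process starting from $S$ is as follows: set $P(0)=S$; at each step one may add to the current set $P$ a vertex $w\notin P$ provided there is a vertex $v\in P$ adjacent to $w$ such that every neighbour of $v$ other than $w$ already lies in $P$ (i.e. $w$ is the unique neighbour of $v$ outside $P$). We say $S$ propagates in $G$ if, by repeated application of this rule, the current set can eventually become all of $V(G)$. $\pi(G)$ denotes the minimum cardinality of a set $S\subseteq V(G)$ that propagates in $G$. For a tree $T$, $\pi_{leaf}(T)$ denotes the minimum cardinality of a set consisting only of leaves (vertices of degree one) of $T$ that propagates in $T$. *)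

From Stdlib Require Import Relation_Operators.
From mathcomp Require Import all_boot all_order all_algebra.
Set Implicit Arguments. Unset Strict Implicit. Unset Printing Implicit Defensive.

Definition simple_graph (V : finType) (e : rel V) : Prop :=
  symmetric e /\ irreflexive e.

Definition force_step (V : finType) (e : rel V) (P Q : {set V}) : Prop :=
  exists v w, [/\ v \in P, w \notin P, e v w,
                  (forall u, e v u -> u != w -> u \in P) & Q = w |: P].

Definition propagates (V : finType) (e : rel V) (S : {set V}) : Prop :=
  clos_refl_trans {set V} (@force_step V e) S [set: V].

Definition degree (V : finType) (e : rel V) (v : V) : nat := #|[set u | e v u]|.

(* Leaf = vertex of degree one.  Convention: in the one-vertex tree the unique
   vertex is also regarded as a leaf. *)
Definition is_leaf (V : finType) (e : rel V) (v : V) : bool :=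
  (degree e v == 1) || (#|V| == 1).

Definition pi_is (V : finType) (e : rel V) (n : nat) : Prop :=
  (exists S : {set V}, propagates e S /\ #|S| = n) /\
  (forall S : {set V}, propagates e S -> n <= #|S|).

Definition pi_leaf_is (V : finType) (e : rel V) (n : nat) : Prop :=
  (exists S : {set V}, {subset S <= is_leaf e} /\ propagates e S /\ #|S| = n) /\
  (forall S : {set V}, {subset S <= is_leaf e} -> propagates e S -> n <= #|S|).

(* Balanced binary tree T_{2,k}: vertices 0 .. 2^k - 2 (heap numbering),
   vertex i has children 2i+1 and 2i+2 (when present). *)
Definition btree_V (k : nat) := 'I_(2 ^ k).-1.

Definition btree_adj (k : nat) : rel (btree_V k) :=
  fun i j => [|| val j == (val i).*2.+1, val j == (val i).*2.+2,
                 val i == (val j).*2.+1 | val i == (val j).*2.+2].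

Definition jacobsthal_formula (k : nat) : nat :=
  `|(((2 : int) ^+ k + (-1) ^+ (k - 1)) %/ 3)%Z|%N.

From mathcomp Require Import all_boot all_order all_algebra.
From Stdlib Require Import Relation_Operators.
From mathcomp Require Import zify.
Set Implicit Arguments. Unset Strict Implicit. Unset Printing Implicit Defensive.

Import GRing.Theory.

(* Lower bound: if Z is a vertex cover, a forcing step along an edge vw puts w into
   P and either w into Z :&: P or, when v \in Z, v into the set of vertices of Z
   whose whole neighbourhood lies in P.  The sum of these two counts is at most
   2 #|Z|, so a propagating set has at least |V| - 2 |Z| vertices.  In T_{2,k} the
   levels at even height >= 2 form a vertex cover with |V| - 2 |Z| equal to the
   Jacobsthal number.
   Upper bound: seed leaves are chosen recursively in three kinds, according to
   the help a subtree needs from outside to be forced entirely; the seeds of a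
   subtree are those of its two child subtrees for suitable kinds, so their
   numbers satisfy the Jacobsthal recurrence. *)

Section Forcing.

Variables (V : finType) (e : rel V).

Implicit Types (A B C P Q S : {set V}).

Local Notation steps := (clos_refl_trans {set V} (force_step e)).

Lemma steps_monotone P Q P' :
  steps P Q -> P \subset P' -> exists2 Q' : {set V}, Q :|: P' \subset Q' & steps P' Q'.
Proof.
move=> sPQ; elim: sPQ P' => {P Q} [P Q [v [w [vP wP evw Hv ->]]]|P|P Q R _ IH1 _ IH2] P' sPP'.
- have vP' := subsetP sPP' v vP.
  case wP': (w \in P').
    exists P'; last exact: rt_refl.
    by rewrite !subUset sub1set wP' sPP' subxx.
  exists (w |: P').
    by rewrite !subUset sub1set setU11 subsetUr (subset_trans sPP') ?subsetUr.
  apply: rt_step; exists v, w; split; rewrite ?wP' //.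
  by move=> u evu uw; rewrite (subsetP sPP') ?Hv.
- by exists P'; [rewrite subUset sPP' subxx | exact: rt_refl].
- have [Q1 sQ1 c1] := IH1 _ sPP'.
  have [Q2 sQ2 c2] := IH2 Q1 (subset_trans (subsetUl _ _) sQ1).
  exists Q2; last exact: rt_trans c1 c2.
  rewrite subUset (subset_trans (subsetUl _ _) sQ2) /=.
  exact: subset_trans (subset_trans (subsetUr Q _) sQ1) (subset_trans (subsetUr R _) sQ2).
Qed.

Definition forces (A B : {set V}) := exists2 Q : {set V}, B \subset Q & steps A Q.

Lemma forces_sub A B : B \subset A -> forces A B.
Proof. by move=> sBA; exists A; last exact: rt_refl. Qed.

Lemma forces_trans A B C : forces A B -> forces B C -> forces A C.
Proof.
move=> [Q1 sBQ1 c1] [Q2 sCQ2 c2].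
have [Q3 sQ3 c3] := steps_monotone c2 sBQ1.
exists Q3; last exact: rt_trans c1 c3.
exact: subset_trans sCQ2 (subset_trans (subsetUl _ _) sQ3).
Qed.

Lemma forces_widen A B C : forces B C -> B \subset A -> forces A (A :|: C).
Proof.
move=> [Q sCQ c] sBA; have [Q' sQ' c'] := steps_monotone c sBA.
by exists Q' => //; apply: subset_trans sQ'; rewrite setUC setSU.
Qed.

Lemma forces_step A v w :
  v \in A -> e v w -> (forall u, e v u -> u != w -> u \in A) -> forces A (w |: A).
Proof.
move=> vA evw Hv; case wA: (w \in A).
  by apply: forces_sub; rewrite subUset sub1set wA subxx.
by exists (w |: A) => //; apply: rt_step; exists v, w; split; rewrite ?wA.
Qed.

Lemma forces_propagates S : forces S [set: V] -> propagates e S.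
Proof.
move=> [Q sTQ c]; suff QT : Q = [set: V] by rewrite /propagates -QT.
by apply/eqP; rewrite eqEsubset subsetT.
Qed.

Definition saturated (P : {set V}) := [set v | [forall u, e v u ==> (u \in P)]].

Lemma saturatedS P Q : P \subset Q -> saturated P \subset saturated Q.
Proof.
move=> sPQ; apply/subsetP=> v; rewrite !inE => /forallP Hv.
by apply/forallP=> u; apply/implyP=> /(implyP (Hv u)) /(subsetP sPQ).
Qed.

Definition vertex_cover (Z : {set V}) := forall x y, e x y -> (x \in Z) || (y \in Z).

Variable Z : {set V}.
Hypothesis coverZ : vertex_cover Z.

Definition cover_weight P := #|Z :&: P| + #|Z :&: saturated P|.

Lemma force_step_weight P Q :
  force_step e P Q -> #|Q| + cover_weight P <= #|P| + cover_weight Q.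
Proof.
move=> [v [w [vP wP evw Hv ->]]]; rewrite /cover_weight cardsU1 wP.
have sPQ : P \subset w |: P by apply: subsetUr.
have leP := subset_leq_card (setIS Z sPQ).
have leS := subset_leq_card (setIS Z (saturatedS sPQ)).
case/orP: (coverZ evw) => Zv.
  suff /proper_card : Z :&: saturated P \proper Z :&: saturated (w |: P) by lia.
  rewrite properE setIS ?saturatedS //=; apply/subsetPn; exists v.
    rewrite !inE Zv; apply/forallP=> u; apply/implyP=> evu.
    by rewrite !inE; case: (eqVneq u w) => [//|/(Hv u evu) ->]; rewrite orbT.
  by rewrite !inE Zv; apply/forallP=> /(_ w); rewrite evw (negbTE wP).
suff /proper_card : Z :&: P \proper Z :&: (w |: P) by lia.
by rewrite properE setIS //=; apply/subsetPn; exists w; rewrite !inE ?eqxx Zv ?(negbTE wP).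
Qed.

Lemma steps_weight P Q : steps P Q -> #|Q| + cover_weight P <= #|P| + cover_weight Q.
Proof. by elim=> [P' Q' /force_step_weight|P'|P' Q' R _ IH1 _ IH2] //; lia. Qed.

Lemma propagates_cover_bound S : propagates e S -> #|V| <= #|S| + 2 * #|Z|.
Proof.
move=> /steps_weight; rewrite cardsT /cover_weight.
have := subset_leq_card (subsetIl Z [set: V]).
have := subset_leq_card (subsetIl Z (saturated [set: V])).
lia.
Qed.

End Forcing.

Implicit Type f : nat -> bool.

Definition tree_adj (i j : nat) : bool :=
  [|| j == i.*2.+1, j == i.*2.+2, i == j.*2.+1 | i == j.*2.+2].

Definition parent_of (i : nat) : pred nat := fun j => (0 < i) && (j == (i - 1) %/ 2).

Lemma parent_of_left i j : parent_of i.*2.+1 j = (j == i).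
Proof. by rewrite /parent_of; apply/idP/idP; lia. Qed.

Lemma parent_of_right i j : parent_of i.*2.+2 j = (j == i).
Proof. by rewrite /parent_of; apply/idP/idP; lia. Qed.

Lemma tree_adj_parent i u : tree_adj i u -> ~~ parent_of i u -> (u == i.*2.+1) || (u == i.*2.+2).
Proof. by rewrite /tree_adj /parent_of; lia. Qed.

Definition at_depth (d i : nat) := 2 ^ d <= i.+1 < 2 ^ d.+1.

Lemma at_depth_exists i : exists d, at_depth d i.
Proof. by exists (trunc_log 2 i.+1); apply: trunc_log_bounds. Qed.

Lemma at_depth_child d i c :
  at_depth d i -> (c == i.*2.+1) || (c == i.*2.+2) -> at_depth d.+1 c.
Proof. by rewrite /at_depth !(expnS 2 d.+1) (expnS 2 d); lia. Qed.

Lemma at_depth_lt d i k : at_depth d i -> d < k -> i < (2 ^ k).-1.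
Proof.
move=> /andP[_ lt_i] lt_dk; have : 2 ^ d.+1 <= 2 ^ k by rewrite leq_pexp2l.
lia.
Qed.

Lemma at_depth_gt d i k : at_depth d i -> k <= d.+1 -> (2 ^ k).-1 <= i.*2.+1.
Proof.
move=> /andP[le_i _] le_kd; have : 2 ^ k <= 2 ^ d.+1 by rewrite leq_pexp2l.
rewrite expnS; lia.
Qed.

(* The vertices of the height-h subtree rooted at i whose height (leaves having
   height 1) satisfies f. *)
Fixpoint subtree_levels (f : nat -> bool) (h i : nat) : pred nat :=
  if h is h'.+1 then
    fun j => [|| f h && (j == i), subtree_levels f h' i.*2.+1 j | subtree_levels f h' i.*2.+2 j]
  else xpred0.

Definition subtree := subtree_levels xpredT.

Lemma subtreeS h i j : subtree h.+1 i j = [|| j == i, subtree h i.*2.+1 j | subtree h i.*2.+2 j].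
Proof. by []. Qed.

Lemma subtree0 i j : subtree 0 i j = false.
Proof. by []. Qed.

Lemma subtree_root h i : subtree h.+1 i i.
Proof. by rewrite subtreeS eqxx. Qed.

Lemma mem_subtree_levels f h i t r :
  t < h -> r < 2 ^ t -> f (h - t) -> subtree_levels f h i ((i.+1) * 2 ^ t + r).-1.
Proof.
elim: h i t r => // h IH i [|t] r lt_th lt_r ft.
  by rewrite subn0 in ft; rewrite /= ft (_ : r = 0) ?muln1 ?addn0 ?eqxx //; lia.
apply/or3P; rewrite expnS in lt_r *.
case: (ltnP r (2 ^ t)) => [lt_rt|le_tr]; [apply: Or32|apply: Or33].
  have -> : i.+1 * (2 * 2 ^ t) + r = (i.*2.+1).+1 * 2 ^ t + r by rewrite -[in RHS]mul2n; lia.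
  exact: IH.
rewrite (_ : i.+1 * (2 * 2 ^ t) + r = (i.*2.+2).+1 * 2 ^ t + (r - 2 ^ t)); last first.
  by rewrite -[in RHS]mul2n; lia.
apply: IH => //; lia.
Qed.

Lemma mem_subtree_levels_depth f h j d :
  at_depth d j -> d < h -> f (h - d) -> subtree_levels f h 0 j.
Proof.
move=> /andP[le_j lt_j] lt_dh fd; rewrite expnS in lt_j.
have := @mem_subtree_levels f h 0 d (j.+1 - 2 ^ d) lt_dh ltac:(lia) fd.
by rewrite mul1n (_ : (2 ^ d + (j.+1 - 2 ^ d)).-1 = j) //; lia.
Qed.

(* The help from outside that the seeds of a subtree need in order to force it
   entirely: none, its root's parent, or its root together with that parent
   (see seeds_spread below). *)
Inductive need := need_none | need_parent | need_root.

Definition child_needs (t : need) : need * need :=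
  match t with
  | need_none => (need_none, need_parent)
  | need_parent => (need_none, need_root)
  | need_root => (need_parent, need_root)
  end.

Fixpoint seeds (h : nat) (t : need) (i : nat) : pred nat :=
  match h with
  | 0 => xpred0
  | h'.+1 => if h' is 0 then (if t is need_root then xpred0 else xpred1 i)
             else xpredU (seeds h' (child_needs t).1 i.*2.+1) (seeds h' (child_needs t).2 i.*2.+2)
  end.

Arguments seeds : simpl never.

Lemma seeds_leaf t i : seeds 1 t i = if t is need_root then xpred0 else xpred1 i.
Proof. by []. Qed.

Lemma seedsS h t i :
  seeds h.+2 t i =
  xpredU (seeds h.+1 (child_needs t).1 i.*2.+1) (seeds h.+1 (child_needs t).2 i.*2.+2).
Proof. by []. Qed.

Lemma seeds_at_depth h d t i j :
  0 < h -> at_depth d i -> seeds h t i j -> at_depth (d + h).-1 j.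
Proof.
elim: h d t i => // -[|h] IH d t i _ di.
  by rewrite seeds_leaf addn1; case: t => // /eqP ->.
rewrite seedsS -addSnnS => /orP[] Hs; apply: IH Hs => //;
  by apply: at_depth_child di _; rewrite eqxx ?orbT.
Qed.

Fixpoint nseeds (h : nat) (t : need) : nat :=
  match h with
  | 0 => 0
  | h'.+1 => if h' is 0 then (if t is need_root then 0 else 1)
             else nseeds h' (child_needs t).1 + nseeds h' (child_needs t).2
  end.

Arguments nseeds : simpl never.

Lemma nseedsS h t : nseeds h.+2 t = nseeds h.+1 (child_needs t).1 + nseeds h.+1 (child_needs t).2.
Proof. by []. Qed.

Lemma nseeds_closed h : 0 < h ->
  [/\ 3 * nseeds h need_parent + ~~ odd h = 2 ^ h + odd h,
      nseeds h need_none = nseeds h need_parent + ~~ odd h &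
      nseeds h need_root + odd h = nseeds h need_parent].
Proof.
elim: h => [//|[//|h] IH _]; have [] := IH isT.
by rewrite !nseedsS /= (expnS 2 h.+1) negbK; case: (odd h) => /= *; split; lia.
Qed.

Fixpoint level_count f h : nat := if h is h'.+1 then f h + 2 * level_count f h' else 0.

(* An edge joins heights h and h.+1, one of which is even and at least 2. *)
Definition cover_height h := ~~ odd h && (1 < h).

Lemma level_count_cover h : 0 < h ->
  2 * level_count cover_height h + nseeds h need_parent + 1 = 2 ^ h.
Proof.
elim: h => [//|[//|h] IH _]; have [_] := nseeds_closed (isT : 0 < h.+1).
have := IH isT; rewrite nseedsS /= /cover_height /= (expnS 2 h.+1) negbK.
by case: (odd h) => /=; lia.
Qed.

Lemma jacobsthal_nseeds k : 0 < k -> jacobsthal_formula k = nseeds k need_parent.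
Proof.
move=> k_gt0; have [closed _ _] := nseeds_closed k_gt0.
have odd_k1 : odd (k - 1) = ~~ odd k by case: k k_gt0 {closed} => // k _; rewrite subn1 /= negbK.
rewrite /jacobsthal_formula -signr_odd odd_k1; case: (odd k) closed => /= closed.
  have -> : (2 ^+ k + 1 = ((3 * nseeds k need_parent)%N)%:R :> int)%R.
    by rewrite -natrX -(_ : (2 ^ k + 1)%N = 3 * nseeds k need_parent) ?natrD //; lia.
  by rewrite natrM mulrC mulzK // natz.
have -> : (2 ^+ k - 1 = ((3 * nseeds k need_parent)%N)%:R :> int)%R.
  by rewrite -natrX (_ : 2 ^ k = (3 * nseeds k need_parent).+1) ?natrS ?addrK //; lia.
by rewrite natrM mulrC mulzK // natz.
Qed.

Section BinaryTree.

Variable k : nat.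

Local Notation T := (btree_V k).
Local Notation n := (2 ^ k).-1.

Implicit Types A B C : pred nat.

Definition vset (A : pred nat) : {set T} := [set x | A (val x)].

Lemma vsetU A B : vset (xpredU A B) = vset A :|: vset B.
Proof. by apply/setP=> x; rewrite !inE. Qed.

Lemma vset_sub A B : (forall j, A j -> B j) -> vset A \subset vset B.
Proof. by move=> AB; apply/subsetP=> x; rewrite !inE => /AB. Qed.

Definition tforces (A B : pred nat) := forces (@btree_adj k) (vset A) (vset B).

Lemma tforces_sub A B : (forall j, B j -> A j) -> tforces A B.
Proof. by move=> BA; apply/forces_sub/vset_sub. Qed.

Lemma tforces_trans A B C : tforces A B -> tforces B C -> tforces A C.
Proof. exact: forces_trans. Qed.

Lemma tforces_widen A B C : tforces B C -> (forall j, B j -> A j) -> tforces A (xpredU A C).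
Proof. by move=> fBC BA; rewrite /tforces vsetU; apply: forces_widen fBC (vset_sub BA). Qed.

Lemma tforces_step A i w :
  i < n -> w < n -> A i -> tree_adj i w ->
  (forall u, u < n -> tree_adj i u -> u != w -> A u) -> tforces A (xpredU A (xpred1 w)).
Proof.
move=> lt_i lt_w Ai iw Hi; rewrite /tforces.
have -> : vset (xpredU A (xpred1 w)) = Ordinal lt_w |: vset A.
  by apply/setP=> x; rewrite !inE orbC -val_eqE.
apply: (@forces_step _ _ _ (Ordinal lt_i)); rewrite ?inE //.
by move=> u iu; rewrite -val_eqE inE; apply: Hi iu; apply: ltn_ord.
Qed.

Lemma tforces_parent A i :
  i < n -> A i -> (forall u, u < n -> tree_adj i u -> ~~ parent_of i u -> A u) ->
  tforces A (xpredU A (parent_of i)).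
Proof.
move=> lt_i Ai Hi; have [->|i_gt0] := posnP i.
  by apply: tforces_sub => j /=; rewrite orbF.
have lt_p : (i - 1) %/ 2 < n by lia.
have ip : tree_adj i ((i - 1) %/ 2) by rewrite /tree_adj; lia.
apply: tforces_trans (tforces_step lt_i lt_p Ai ip _) _.
  by move=> u lt_u iu ne_u; apply: Hi; rewrite /parent_of ?i_gt0.
by apply: tforces_sub => j /= /orP[->|/andP[_ ->]]; rewrite ?orbT.
Qed.

Lemma tforces_right_child A i :
  i.*2.+2 < n -> A i -> (forall u, parent_of i u -> A u) -> A i.*2.+1 ->
  tforces A (xpredU A (xpred1 i.*2.+2)).
Proof.
move=> lt_c Ai Ap Al; apply: tforces_step Ai _ _ => //; first lia.
  by rewrite /tree_adj eqxx orbT.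
move=> u _ iu ne_u; have [/Ap //|/tree_adj_parent] := boolP (parent_of i u).
by move=> /(_ iu); rewrite (negbTE ne_u) orbF => /eqP ->.
Qed.

Definition seeds_spread h i :=
  [/\ tforces (seeds h need_none i) (xpredU (subtree h i) (parent_of i)),
      tforces (seeds h need_parent i) (xpred1 i),
      tforces (xpredU (seeds h need_parent i) (parent_of i)) (subtree h i) &
      tforces (xpredU (xpredU (seeds h need_root i) (xpred1 i)) (parent_of i)) (subtree h i)].

Ltac pred_incl :=
  let j := fresh "j" in let H := fresh "H" in
  move=> j H; rewrite ?parent_of_left ?parent_of_right ?subtreeS ?subtree0 in H *;
  repeat case/orP: H => H;
  first [ by rewrite H ?orbT
        | by move/eqP: H => ->; rewrite ?subtree_root ?eqxx ?orbT
        | by move: H ].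

Lemma seeds_spread_leaf d i : at_depth d i -> d.+1 = k -> seeds_spread 1 i.
Proof.
move=> di dk; rewrite /seeds_spread !seeds_leaf.
split; try by apply: tforces_sub; pred_incl.
have lt_i : i < n by apply: at_depth_lt di _; rewrite dk.
have le_c : n <= i.*2.+1 by apply: at_depth_gt di _; rewrite dk.
apply: tforces_trans (@tforces_parent (xpred1 i) i lt_i (eqxx i) _) _.
  by move=> u lt_u /tree_adj_parent iu /iu; lia.
by apply: tforces_sub; pred_incl.
Qed.

Lemma seeds_spread_node d h i :
  at_depth d i -> d + h.+2 = k ->
  seeds_spread h.+1 i.*2.+1 -> seeds_spread h.+1 i.*2.+2 -> seeds_spread h.+2 i.
Proof.
move=> di dk [Nl Pl Ql Rl] [Nr Pr Qr Rr]; rewrite /seeds_spread !seedsS /=.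
have lt_i : i < n by apply: at_depth_lt di _; rewrite -dk; lia.
have lt_r : i.*2.+2 < n.
  by apply: (@at_depth_lt d.+1) _; [apply: at_depth_child di _; rewrite eqxx orbT | lia].
have rootl := subtree_root h i.*2.+1.
split.
- apply: tforces_trans (tforces_widen Nl _) _; first by pred_incl.
  apply: tforces_trans (tforces_widen Pr _) _; first by pred_incl.
  apply: tforces_trans (tforces_parent lt_i _ _) _.
  + by rewrite /= parent_of_left eqxx !orbT.
  + move=> u _ /tree_adj_parent iu /iu /orP[] /eqP ->;
      by rewrite /= ?rootl ?eqxx !orbT.
  apply: tforces_trans (tforces_widen Qr _) _; first by pred_incl.
  by apply: tforces_sub; pred_incl.
- apply: tforces_trans (tforces_widen Nl _) _; first by pred_incl.
  by apply: tforces_sub; pred_incl.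
- apply: tforces_trans (tforces_widen Nl _) _; first by pred_incl.
  apply: tforces_trans (tforces_right_child lt_r _ _ _) _.
  + by rewrite /= parent_of_left eqxx !orbT.
  + by move=> u pu; rewrite /= pu !orbT.
  + by rewrite /= rootl !orbT.
  apply: tforces_trans (tforces_widen Rr _) _; first by pred_incl.
  by apply: tforces_sub; pred_incl.
- apply: tforces_trans (tforces_widen Pl _) _; first by pred_incl.
  apply: tforces_trans (tforces_right_child lt_r _ _ _) _.
  + by rewrite /= eqxx !orbT.
  + by move=> u pu; rewrite /= pu !orbT.
  + by rewrite /= eqxx !orbT.
  apply: tforces_trans (tforces_widen Ql _) _; first by pred_incl.
  apply: tforces_trans (tforces_widen Rr _) _; first by pred_incl.
  by apply: tforces_sub; pred_incl.
Qed.

Lemma seeds_spread_at h d i : 0 < h -> at_depth d i -> d + h = k -> seeds_spread h i.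
Proof.
elim: h d i => [//|[|h] IH] d i _ di dk.
  by apply: seeds_spread_leaf di _; rewrite -dk addn1.
apply: (seeds_spread_node di dk); apply: (IH d.+1) => //; try lia;
  by apply: at_depth_child di _; rewrite eqxx ?orbT.
Qed.

Lemma card_vsetU A B : #|vset (xpredU A B)| <= #|vset A| + #|vset B|.
Proof. by rewrite vsetU cardsU leq_subr. Qed.

Lemma card_vset1 i : #|vset (xpred1 i)| <= 1.
Proof.
by apply/card_le1_eqP => x y; rewrite !inE => /eqP xi /eqP yi; apply: val_inj; rewrite xi yi.
Qed.

Lemma card_vset0 : #|vset xpred0| = 0.
Proof. by apply/eqP; rewrite cards_eq0; apply/eqP/setP=> x; rewrite !inE. Qed.

Lemma card_seeds h t i : #|vset (seeds h t i)| <= nseeds h t.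
Proof.
elim: h t i => [|[|h] IH] t i; first by rewrite card_vset0.
  by rewrite seeds_leaf; case: t; rewrite ?card_vset0 ?card_vset1.
rewrite seedsS nseedsS; apply: leq_trans (card_vsetU _ _) _.
by apply: leq_add; apply: IH.
Qed.

Lemma card_subtree_levels f h i : #|vset (subtree_levels f h i)| <= level_count f h.
Proof.
elim: h i => [|h IH] i /=; first by rewrite card_vset0.
have -> : vset (subtree_levels f h.+1 i) =
    vset (fun j => f h.+1 && (j == i)) :|: vset (xpredU (subtree_levels f h i.*2.+1)
                                                         (subtree_levels f h i.*2.+2)).
  by apply/setP=> x; rewrite !inE.
rewrite cardsU (leq_trans (leq_subr _ _)) //; apply: leq_add.
  by case: (f h.+1); [apply: card_vset1 | rewrite card_vset0].
by rewrite mulSn mul1n; apply: leq_trans (card_vsetU _ _) (leq_add (IH _) (IH _)).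
Qed.

Lemma subtree_cover_edge a b :
  b < n -> (b == a.*2.+1) || (b == a.*2.+2) ->
  subtree_levels cover_height k 0 a || subtree_levels cover_height k 0 b.
Proof.
move=> lt_b ab; have [d da] := at_depth_exists a.
have db := at_depth_child da ab.
have lt_dk : d.+1 < k.
  move: db => /andP[le_b _]; rewrite -(@ltn_exp2l 2) //.
  by apply: leq_ltn_trans le_b _; rewrite -ltn_predRL.
have [odd_kd|even_kd] := boolP (odd (k - d)).
  apply/orP; right; apply: mem_subtree_levels_depth db _ _ => //.
  by rewrite /cover_height; move: odd_kd; rewrite (_ : k - d = (k - d.+1).+1) /=; lia.
apply/orP; left; apply: mem_subtree_levels_depth da _ _; first lia.
by rewrite /cover_height even_kd; lia.
Qed.

Lemma subtree_cover : vertex_cover (@btree_adj k) (vset (subtree_levels cover_height k 0)).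
Proof.
move=> x y; rewrite !inE /btree_adj; have lt_x := ltn_ord x; have lt_y := ltn_ord y.
case/or4P=> xy.
- by apply: subtree_cover_edge lt_y _; rewrite xy.
- by apply: subtree_cover_edge lt_y _; rewrite xy orbT.
- by rewrite orbC; apply: subtree_cover_edge lt_x _; rewrite xy.
- by rewrite orbC; apply: subtree_cover_edge lt_x _; rewrite xy orbT.
Qed.

Lemma nseeds_le_propagating S :
  0 < k -> propagates (@btree_adj k) S -> nseeds k need_parent <= #|S|.
Proof.
move=> k_gt0 /(propagates_cover_bound subtree_cover); rewrite card_ord.
have := card_subtree_levels cover_height k 0.
have := level_count_cover k_gt0; have : 0 < 2 ^ k by rewrite expn_gt0.
by move: #|S| #|vset _| => s c; lia.
Qed.

Lemma at_depth_leaf (x : T) : 0 < k -> at_depth k.-1 (val x) -> is_leaf (@btree_adj k) x.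
Proof.
case: x => m lt_m k_gt0; rewrite /at_depth /= => /andP[le_m _].
have e2k : 2 ^ k = 2 * 2 ^ k.-1 by rewrite -expnS prednK.
have [m0|m_gt0] := posnP m.
  have pos : 0 < 2 ^ k.-1 by rewrite expn_gt0.
  by apply/orP; right; rewrite card_ord; move: le_m; rewrite m0 e2k; lia.
have lt_p : (m - 1) %/ 2 < n by lia.
apply/orP; left; rewrite /degree (_ : [set u | btree_adj _ u] = [set Ordinal lt_p]) ?cards1 //.
by apply/setP=> -[j lt_j]; rewrite !inE -val_eqE /= /btree_adj /=; apply/idP/idP; lia.
Qed.

Lemma subtree_full (x : T) : subtree k 0 (val x).
Proof.
have lt_x : val x < n := ltn_ord x.
have [d dx] := at_depth_exists (val x); apply: (mem_subtree_levels_depth dx) => //.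
move: dx => /andP[le_x _]; rewrite -(@ltn_exp2l 2) //.
have : 0 < 2 ^ k by rewrite expn_gt0.
lia.
Qed.

Lemma seeds_propagate : 0 < k -> propagates (@btree_adj k) (vset (seeds k need_parent 0)).
Proof.
move=> k_gt0; have [_ _ spread _] := seeds_spread_at k_gt0 (isT : at_depth 0 0) (add0n k).
have no_parent : tforces (seeds k need_parent 0) (xpredU (seeds k need_parent 0) (parent_of 0)).
  by apply: tforces_sub => j /orP[].
apply/forces_propagates/(forces_trans (tforces_trans no_parent spread))/forces_sub.
by apply/subsetP=> x _; rewrite inE subtree_full.
Qed.

Lemma seeds_leaves : 0 < k -> {subset vset (seeds k need_parent 0) <= is_leaf (@btree_adj k)}.
Proof.
move=> k_gt0 x; rewrite inE => /(seeds_at_depth k_gt0 (isT : at_depth 0 0)).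
by rewrite add0n; apply: at_depth_leaf.
Qed.

End BinaryTree.

Theorem lemma1 (k : nat) (hk : 1 <= k) :
  pi_leaf_is (@btree_adj k) (jacobsthal_formula k) /\
  pi_is (@btree_adj k) (jacobsthal_formula k).
Proof.
have lower S : propagates (@btree_adj k) S -> jacobsthal_formula k <= #|S|.
  by rewrite jacobsthal_nseeds //; apply: nseeds_le_propagating.
set S0 := vset k (seeds k need_parent 0).
have prop_S0 : propagates (@btree_adj k) S0 := seeds_propagate hk.
have card_S0 : #|S0| = jacobsthal_formula k.
  by apply/eqP; rewrite eqn_leq lower // andbT jacobsthal_nseeds // card_seeds.
split; split; try by move=> S; auto.
- by exists S0; split; [exact: seeds_leaves | split].
- by exists S0.
Qed.
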